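(* Let $\beta>1$, $n\in\mathbb{N}$, $C_\beta=2+\frac{2(\beta-1)^2}{2\beta-1}$ and $$h(t,\tau)=2\big(nt-\tau|\tau|^{\beta-1}\big)^2-C_\beta(t-\tau)\big(n^2t-\tau|\tau|^{2(\beta-1)}\big).$$ Then $h(t,\tau)\le0$ for all real $t,\tau$ with $|t|>n^{1/(\beta-1)}$ and $|\tau|\le n^{1/(\beta-1)}$. *)

From Stdlib Require Import Reals.
Open Scope R_scope.

(* Real power x^y for x >= 0 and y > 0, with the convention 0^y = 0
   (Stdlib's Rpower 0 y = exp (y * ln 0) = 1 would be wrong at 0). *)
Definition rpow (x y : R) : R := if Req_EM_T x 0 then 0 else Rpower x y.

Definition C_beta (beta : R) : R := 2 + 2 * (beta - 1) ^ 2 / (2 * beta - 1).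

Definition h (beta : R) (n : nat) (t tau : R) : R :=
  2 * (INR n * t - tau * rpow (Rabs tau) (beta - 1)) ^ 2
  - C_beta beta * (t - tau) *
    (INR n ^ 2 * t - tau * rpow (Rabs tau) (2 * (beta - 1))).

From Stdlib Require Import Reals Lra Psatz.
From Coquelicot Require Import Coquelicot.
Open Scope R_scope.

(* Write a = beta - 1, N = n^(1/a), p = |tau|^a and C_beta = 2 + D.  Since
   h(-t,-tau) = h(t,tau) we may take t >= N, and then
     N h(t,tau) = t E + D (t - N) (tau^2 p^2 - N n^2 t)
   where E = h(N,tau) and the last term is nonpositive, so it suffices to
   show E <= 0.  For tau <= 0 this is a sign check; for 0 < tau <= N the scaling
   v = tau/N turns it into (2a+1) v (1 - v^a)^2 <= a^2 (1 - v) (1 - v^(2a+1)),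
   which at v = exp(-w) is (a+1)^2 cosh(a w) <= a^2 cosh((a+1) w) + 2a + 1,
   an inequality proved by differentiating twice. *)

Lemma le_of_derive_nonneg (f df : R -> R) (a b : R) :
  a <= b ->
  (forall x, a <= x <= b -> is_derive f x (df x)) ->
  (forall x, a <= x <= b -> 0 <= df x) ->
  f a <= f b.
Proof.
  intros hab hd hdf.
  destruct (MVT_gen f a b df) as [c [hc hmvt]];
    rewrite ?Rmin_left, ?Rmax_right in * by lra.
  - intros x hx; apply hd; lra.
  - intros x hx; apply continuity_pt_filterlim,
      (ex_derive_continuous (K := R_AbsRing) (V := R_NormedModule)).
    eexists; apply hd; lra.
  - assert (0 <= df c * (b - a)) by (apply Rmult_le_pos; [apply hdf|]; lra).
    lra.
Qed.

Lemma is_derive_cosh x : is_derive cosh x (sinh x).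
Proof. apply is_derive_Reals, derivable_pt_lim_cosh. Qed.

Lemma sinh_nonneg x : 0 <= x -> 0 <= sinh x.
Proof.
  intros [hx | <-]; [left; rewrite <- sinh_0; now apply sinh_lt |].
  rewrite sinh_0; lra.
Qed.

Lemma cosh_le x y : 0 <= x <= y -> cosh x <= cosh y.
Proof.
  intros hxy; apply (le_of_derive_nonneg _ sinh); try lra.
  - intros z _; apply is_derive_cosh.
  - intros z hz; apply sinh_nonneg; lra.
Qed.

Lemma sinh_scale_le a w : 0 < a -> 0 <= w ->
  (a + 1) * sinh (a * w) <= a * sinh ((a + 1) * w).
Proof.
  intros ha hw.
  set (f w := a * sinh ((a + 1) * w) - (a + 1) * sinh (a * w)).
  enough (f 0 <= f w) by (unfold f in *; rewrite !Rmult_0_r, sinh_0 in *; lra).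
  apply (le_of_derive_nonneg _ (fun w => a * (a + 1) * (cosh ((a + 1) * w) - cosh (a * w))));
    [lra | |].
  - intros x _; unfold f, sinh, cosh; auto_derive; [easy | field].
  - intros x hx; apply Rmult_le_pos; [nra|].
    assert (cosh (a * x) <= cosh ((a + 1) * x)) by (apply cosh_le; nra); lra.
Qed.

Lemma cosh_scale_le a w : 0 < a -> 0 <= w ->
  (a + 1) ^ 2 * cosh (a * w) <= a ^ 2 * cosh ((a + 1) * w) + (2 * a + 1).
Proof.
  intros ha hw.
  set (f w := a ^ 2 * cosh ((a + 1) * w) + (2 * a + 1) - (a + 1) ^ 2 * cosh (a * w)).
  enough (f 0 <= f w) by (unfold f in *; rewrite !Rmult_0_r, cosh_0 in *; lra).
  apply (le_of_derive_nonneg _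
           (fun w => a * (a + 1) * (a * sinh ((a + 1) * w) - (a + 1) * sinh (a * w))));
    [lra | |].
  - intros x _; unfold f, sinh, cosh; auto_derive; [easy | field].
  - intros x hx; apply Rmult_le_pos; [nra|].
    assert (H := sinh_scale_le a x ha (proj1 hx)); lra.
Qed.

Lemma power_gap_le a v : 0 < a -> 0 < v <= 1 ->
  (2 * a + 1) * v * (1 - Rpower v a) ^ 2
  <= a ^ 2 * (1 - v) * (1 - v * Rpower v a ^ 2).
Proof.
  intros ha hv.
  set (w := - ln v); set (y := Rpower v a).
  assert (hw : 0 <= w).
  { unfold w; destruct (Req_dec v 1) as [-> | hv1]; [rewrite ln_1; lra |].
    enough (ln v < ln 1) by (rewrite ln_1 in *; lra); apply ln_increasing; lra. }
  assert (hy : 0 < y) by (unfold y; apply exp_pos).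
  assert (e1 : exp (- (a * w)) = y) by (unfold y, Rpower, w; f_equal; ring).
  assert (e2 : exp (- ((a + 1) * w)) = v * y).
  { rewrite <- e1, <- (exp_ln v) at 1 by lra; rewrite <- exp_plus; f_equal; unfold w; ring. }
  assert (e3 : exp (a * w) = / y) by (rewrite <- e1, <- exp_Ropp, Ropp_involutive; easy).
  assert (e4 : exp ((a + 1) * w) = / (v * y))
    by (rewrite <- e2, <- exp_Ropp, Ropp_involutive; easy).
  assert (H := cosh_scale_le a w ha hw); unfold cosh in H.
  rewrite e1, e2, e3, e4 in H.
  assert (a ^ 2 * (1 - v) * (1 - v * y ^ 2) - (2 * a + 1) * v * (1 - y) ^ 2
          = 2 * (v * y) * (a ^ 2 * ((/ (v * y) + v * y) / 2) + (2 * a + 1)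
                           - (a + 1) ^ 2 * ((/ y + y) / 2))) by (field; lra).
  assert (0 <= v * y) by nra.
  nra.
Qed.

Lemma rpow_nonneg x e : 0 <= rpow x e.
Proof. unfold rpow; destruct Req_EM_T; [lra | left; apply exp_pos]. Qed.

Lemma rpow_pos x e : 0 < x -> rpow x e = Rpower x e.
Proof. intros hx; unfold rpow; destruct Req_EM_T; [lra | easy]. Qed.

Lemma rpow_0_l e : rpow 0 e = 0.
Proof. unfold rpow; destruct Req_EM_T; [easy | lra]. Qed.

Lemma rpow_plus x e f : rpow x (e + f) = rpow x e * rpow x f.
Proof. unfold rpow; destruct Req_EM_T; [ring | apply Rpower_plus]. Qed.

Lemma rpow_rpow x e f : 0 <= x -> rpow (rpow x e) f = rpow x (e * f).
Proof.
  intros [hx | <-]; [| now rewrite !rpow_0_l].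
  rewrite (rpow_pos x e), rpow_pos, Rpower_mult, rpow_pos; auto; apply exp_pos.
Qed.

Lemma rpow_1 x : 0 <= x -> rpow x 1 = x.
Proof. intros [hx | <-]; [rewrite rpow_pos; auto; apply Rpower_1 | apply rpow_0_l]; auto. Qed.

Lemma rpow_le_compat x y e : 0 <= x <= y -> 0 <= e -> rpow x e <= rpow y e.
Proof.
  intros [[hx | <-] hxy] he; [| rewrite rpow_0_l; apply rpow_nonneg].
  rewrite !rpow_pos by lra; apply Rle_Rpower_l; lra.
Qed.

(* Equivalent to h(N, tau) <= 0, the boundary case of the theorem. *)
Lemma endpoint_le a N tau : 0 < a -> 0 <= N -> Rabs tau <= N ->
  2 * N * tau * (rpow N a - rpow (Rabs tau) a) ^ 2
  <= 2 * a ^ 2 / (2 * a + 1) * (N - tau)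
     * (N * rpow N a ^ 2 - tau * rpow (Rabs tau) a ^ 2).
Proof.
  intros ha hN htau.
  set (n := rpow N a); set (p := rpow (Rabs tau) a).
  assert (hp : 0 <= p <= n)
    by (split; [apply rpow_nonneg | apply rpow_le_compat; [split; [apply Rabs_pos|] |]; lra]).
  assert (hD : 0 < 2 * a ^ 2 / (2 * a + 1)) by (apply Rdiv_lt_0_compat; nra).
  destruct (Rle_or_lt tau 0) as [htau0 | htau0].
  - assert (0 <= (n - p) ^ 2) by apply pow2_ge_0.
    assert (N * tau <= 0) by nra.
    assert (2 * N * tau * (n - p) ^ 2 <= 0) by nra.
    assert (0 <= N * n ^ 2 - tau * p ^ 2) by nra.
    assert (0 <= 2 * a ^ 2 / (2 * a + 1) * (N - tau)) by nra.
    nra.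
  - rewrite Rabs_right in htau by lra.
    set (v := tau / N); set (y := Rpower v a).
    assert (hv : 0 < v <= 1).
    { unfold v; split; [apply Rdiv_lt_0_compat; lra |].
      apply Rmult_le_reg_r with N; [lra|]; field_simplify; lra. }
    assert (htau_v : tau = v * N) by (unfold v; field; lra).
    assert (hp_y : p = y * n).
    { unfold p, n, y; rewrite Rabs_right, !rpow_pos, Rpower_mult_distr, <- htau_v; lra. }
    assert (H := power_gap_le a v ha hv); fold y in H.
    rewrite hp_y, htau_v.
    set (c := 2 * N ^ 2 * n ^ 2 / (2 * a + 1)).
    assert (0 <= c) by (unfold c; apply Rmult_le_pos; [nra | left; apply Rinv_0_lt_compat; lra]).
    replace (2 * N * (v * N) * (n - y * n) ^ 2)
      with (c * ((2 * a + 1) * v * (1 - y) ^ 2)) by (unfold c; field; lra).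
    replace (2 * a ^ 2 / (2 * a + 1) * (N - v * N) * (N * n ^ 2 - v * N * (y * n) ^ 2))
      with (c * (a ^ 2 * (1 - v) * (1 - v * y ^ 2))) by (unfold c; field; lra).
    apply Rmult_le_compat_l; assumption.
Qed.

(* [h] with [|tau|^(beta-1)] abstracted to [p] and [C_beta] written [2 + D]. *)
Definition hpoly (D n p t tau : R) : R :=
  2 * (n * t - tau * p) ^ 2 - (2 + D) * (t - tau) * (n ^ 2 * t - tau * p ^ 2).

Lemma hpoly_opp D n p t tau : hpoly D n p (- t) (- tau) = hpoly D n p t tau.
Proof. unfold hpoly; ring. Qed.

Lemma hpoly_nonpos D N n p t tau : 0 <= D -> 0 <= N <= t -> Rabs tau <= N ->
  0 <= p <= n ->
  2 * N * tau * (n - p) ^ 2 <= D * (N - tau) * (N * n ^ 2 - tau * p ^ 2) ->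
  hpoly D n p t tau <= 0.
Proof.
  intros hD hN htau hp hend.
  destruct (Req_dec N 0) as [hN0 | hN0].
  - assert (tau = 0)
      by (pose proof (Rle_abs tau); pose proof (Rle_abs (- tau)); rewrite Rabs_Ropp in *; lra).
    subst; replace (hpoly D n p t 0) with (- (D * (n * t) ^ 2)) by (unfold hpoly; ring).
    assert (0 <= D * (n * t) ^ 2) by (apply Rmult_le_pos; [| apply pow2_ge_0]; lra).
    lra.
  - assert (hNn : Rabs tau * p <= N * n) by (apply Rmult_le_compat; try apply Rabs_pos; lra).
    assert (htp : (tau * p) ^ 2 <= N * n ^ 2 * t).
    { rewrite <- pow2_abs, Rabs_mult, (Rabs_right p) by lra.
      assert ((Rabs tau * p) ^ 2 <= (N * n) ^ 2)
        by (apply pow_incr; split; [apply Rmult_le_pos; [apply Rabs_pos | lra] | lra]).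
      nra. }
    assert (hid : N * hpoly D n p t tau
                  = t * (2 * N * tau * (n - p) ^ 2 - D * (N - tau) * (N * n ^ 2 - tau * p ^ 2))
                    + D * (t - N) * ((tau * p) ^ 2 - N * n ^ 2 * t)) by (unfold hpoly; ring).
    assert (t * (2 * N * tau * (n - p) ^ 2 - D * (N - tau) * (N * n ^ 2 - tau * p ^ 2)) <= 0)
      by (apply Rmult_le_0_l; lra).
    assert (D * (t - N) * ((tau * p) ^ 2 - N * n ^ 2 * t) <= 0)
      by (apply Rmult_le_0_l; [apply Rmult_le_pos |]; lra).
    assert (0 < N) by lra.
    nra.
Qed.

Lemma hpoly_rpow_nonpos a N t tau : 0 < a -> 0 <= N <= t -> Rabs tau <= N ->
  hpoly (2 * a ^ 2 / (2 * a + 1)) (rpow N a) (rpow (Rabs tau) a) t tau <= 0.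
Proof.
  intros ha hN htau.
  apply (hpoly_nonpos _ N); auto.
  - apply Rmult_le_pos; [nra | left; apply Rinv_0_lt_compat; lra].
  - split; [apply rpow_nonneg | apply rpow_le_compat; [split; [apply Rabs_pos|] |]; lra].
  - apply endpoint_le; lra.
Qed.

Lemma h_eq_hpoly beta n t tau :
  h beta n t tau
  = hpoly (2 * (beta - 1) ^ 2 / (2 * (beta - 1) + 1)) (INR n)
          (rpow (Rabs tau) (beta - 1)) t tau.
Proof.
  unfold h, hpoly, C_beta.
  replace (2 * (beta - 1)) with ((beta - 1) + (beta - 1)) by ring.
  rewrite rpow_plus; f_equal; f_equal; f_equal; [f_equal; f_equal; ring | ring].
Qed.

Theorem lemma4p1 (beta : R) (n : nat) (t tau : R) :
  1 < beta ->
  rpow (INR n) (1 / (beta - 1)) < Rabs t ->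
  Rabs tau <= rpow (INR n) (1 / (beta - 1)) ->
  h beta n t tau <= 0.
Proof.
  intros hb ht htau.
  rewrite h_eq_hpoly.
  set (a := beta - 1) in *; set (N := rpow (INR n) (1 / a)) in *.
  assert (ha : 0 < a) by (unfold a; lra).
  assert (hN : 0 <= N) by apply rpow_nonneg.
  assert (hn : rpow N a = INR n).
  { unfold N; rewrite rpow_rpow, <- rpow_1 by apply pos_INR; f_equal; field; lra. }
  rewrite <- hn.
  destruct (Rle_or_lt 0 t) as [ht0 | ht0].
  - rewrite Rabs_right in ht by lra.
    apply hpoly_rpow_nonpos; lra.
  - rewrite Rabs_left in ht by lra.
    rewrite <- hpoly_opp, <- Rabs_Ropp.
    apply hpoly_rpow_nonpos; rewrite ?Rabs_Ropp; lra.
Qed.
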